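(* Let $f\in\mathfrak{F}$. If $G_1,G_2\in\mathcal{B}_f$, then $G_1\times G_2\in\mathcal{B}_f$.
   Context: $\mathfrak{F}$ is the set of nondecreasing functions from some interval $[Q,\infty)\cap\mathbb{N}$ to the nonnegative reals; $g\preceq f$ means there exist $N\ge0$ and positive integers $K,M$ with $g(n)\le Kf(Mn)$ for all $n\ge N$. For a group $G$ with finite generating set $A$, $S=A\cup A^{-1}$, $\pi:S^*\to G$ the evaluation map and $d_A$ the word metric: a Cayley automatic representation is a bijection $\psi:L\to G$ from a regular $L\subseteq S^*$ such that for each $a\in A$ the relation $\{(\psi^{-1}(g),\psi^{-1}(ga)) : g\in G\}$ is FA-recognizable (i.e., the language of convolutions — parallel readings of the two strings with the shorter padded by a new symbol — is regular). Its function is $h(n)=\max\{d_A(\pi(w),\psi(w)): w\in L,|w|\le n\}$, and $G\in\mathcal{B}_f$ means some Cayley automatic representation (for some finite generating set; this is independent of the choice) has $h\preceq f$. *)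

From mathcomp Require Import all_boot.
From Stdlib Require Import Reals.

Set Implicit Arguments.
Unset Strict Implicit.
Unset Printing Implicit Defensive.

Record Grp := {
  gcar :> Type;
  gmul : gcar -> gcar -> gcar;
  gone : gcar;
  ginv : gcar -> gcar;
  gmulA : forall x y z, gmul x (gmul y z) = gmul (gmul x y) z;
  gmul1 : forall x, gmul gone x = x;
  gmulV : forall x, gmul (ginv x) x = gone
}.

Definition prodGrp (G1 G2 : Grp) : Grp.
Proof.
refine {| gcar := (gcar G1 * gcar G2)%type;
          gmul := fun x y => (gmul x.1 y.1, gmul x.2 y.2);
          gone := (gone G1, gone G2);
          ginv := fun x => (ginv x.1, ginv x.2) |}.
- by move=> [x1 x2] [y1 y2] [z1 z2] /=; rewrite !gmulA.
- by move=> [x1 x2] /=; rewrite !gmul1.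
- by move=> [x1 x2] /=; rewrite !gmulV.
Defined.

Definition evalw (G : Grp) (T : Type) (sg : T -> G) (w : seq T) : G :=
  foldr (fun s acc => gmul (sg s) acc) (gone G) w.

Definition inS (G : Grp) (A : seq G) (x : G) : Prop :=
  exists a, List.In a A /\ (x = a \/ x = ginv a).

Definition generates (G : Grp) (A : seq G) : Prop :=
  forall g : G, exists w : seq G, List.Forall (inS A) w /\ evalw (fun x : G => x) w = g.

(* d_A(g,h) <= x, where d_A(g,h) = least length of a word over S
   evaluating to g^{-1} h (the word metric) *)
Definition dA_le (G : Grp) (A : seq G) (g h : G) (x : R) : Prop :=
  exists w : seq G, List.Forall (inS A) w /\ evalw (fun x : G => x) w = gmul (ginv g) h
                    /\ (INR (size w) <= x)%R.

Definition regular (T : Type) (Lang : seq T -> Prop) : Prop :=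
  exists (Q : finType) (q0 : Q) (delta : Q -> T -> Q) (F : pred Q),
    forall w, Lang w <-> F (foldl delta q0 w).

(* convolution: parallel reading, shorter word padded by None *)
Definition conv (T1 T2 : Type) (u : seq T1) (v : seq T2)
  : seq (option T1 * option T2) :=
  [seq (onth u i, onth v i) | i <- iota 0 (maxn (size u) (size v))].

Definition fa_recognizable (T1 T2 : Type) (Rel : seq T1 -> seq T2 -> Prop) : Prop :=
  regular (fun x => exists u v, Rel u v /\ x = conv u v).

(* The alphabet S = A u A^{-1} is given as a type Sig together with a
   bijection sg : Sig -> S (injective, image exactly S). *)
Definition cayley_automatic (G : Grp) (A : seq G) (Sig : Type) (sg : Sig -> G)
  (L : seq Sig -> Prop) (psi : seq Sig -> G) : Prop :=
  [/\ regular L,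
      (forall g : G, exists w, L w /\ psi w = g),
      (forall u v, L u -> L v -> psi u = psi v -> u = v) &
      (forall a, List.In a A ->
         fa_recognizable (fun u v => L u /\ L v /\ psi v = gmul (psi u) a))].

(* h(n) <= r, where h(n) = max{ d_A(pi w, psi w) : w in L, |w| <= n } *)
Definition cafun_le (G : Grp) (A : seq G) (Sig : Type) (sg : Sig -> G)
  (L : seq Sig -> Prop) (psi : seq Sig -> G) (n : nat) (r : R) : Prop :=
  forall w, L w -> (size w <= n)%N -> dA_le A (evalw sg w) (psi w) r.

(* f in frak F: nondecreasing, nonnegative on [Q, oo) (values below Q are
   irrelevant and never used) *)
Definition frakF (Q : nat) (f : nat -> R) : Prop :=
  (forall n m, (Q <= n)%N -> (n <= m)%N -> (f n <= f m)%R) /\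
  (forall n, (Q <= n)%N -> (0 <= f n)%R).

(* G in B_f : some Cayley automatic representation (for some finite
   generating set A) has h <= f (h preceq f), i.e. there are N, K > 0, M > 0
   with h(n) <= K f(M n) for all n >= N (n >= Q ensures M n is in the domain
   of f). *)
Definition inB (Q : nat) (f : nat -> R) (G : Grp) : Prop :=
  exists (A : seq G), generates A /\
  exists (Sig : Type) (sg : Sig -> G),
    (forall s t, sg s = sg t -> s = t) /\
    (forall x, inS A x <-> exists s, sg s = x) /\
  exists (L : seq Sig -> Prop) (psi : seq Sig -> G),
    cayley_automatic A sg L psi /\
    exists (N K M : nat), (0 < K)%N /\ (0 < M)%N /\
      forall n, (N <= n)%N -> (Q <= n)%N ->
        cafun_le A sg L psi n (INR K * f (muln M n))%R.

From mathcomp Require Import all_boot.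
From Stdlib Require Import Reals.
From Stdlib Require Import ClassicalEpsilon ProofIrrelevance.

Set Implicit Arguments.
Unset Strict Implicit.
Unset Printing Implicit Defensive.

(* Represent [(g1, g2)] by the convolution of the normal forms of [g1] and [g2].
   Regular languages are closed under intersection and under letter-wise preimages
   and injective images, and the two factors are read on separate tracks, so the
   language stays regular and right multiplication by [(a1, a2)] stays
   FA-recognizable.  Spelling the pair letters with the generators
   [(S1 ∪ {1}) × (S2 ∪ {1})], a word [w] of pairs evaluates to the pair of the
   evaluations of its tracks, which are no longer than [w]; hence
   [h(n) ≤ h1(n) + h2(n)], and [h ≼ f] because [f] is nondecreasing.  As the
   alphabet must consist of group elements, each pair letter is written as a block
   of four generators whose first three mark the padding with a nontrivial
   generator [m]; if every generator is trivial, so is the product. *)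

(** * Regular languages *)

Definition inverse_opt (A B : Type) (f : A -> B) (b : B) : option A :=
  match excluded_middle_informative (exists a, f a = b) with
  | left H => Some (proj1_sig (constructive_indefinite_description _ H))
  | right _ => None
  end.

Lemma inverse_optE (A B : Type) (f : A -> B) a :
  injective f -> inverse_opt f (f a) = Some a.
Proof.
move=> finj; rewrite /inverse_opt; case: excluded_middle_informative => [H|[]].
  by case: constructive_indefinite_description => /= a' /finj ->.
by exists a.
Qed.

Lemma inverse_optP (A B : Type) (f : A -> B) b a :
  inverse_opt f b = Some a -> f a = b.
Proof.
rewrite /inverse_opt; case: excluded_middle_informative => // H [<-].
by case: constructive_indefinite_description.
Qed.

Lemma eq_regular T (L L' : seq T -> Prop) :
  (forall w, L w <-> L' w) -> regular L -> regular L'.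
Proof.
move=> eqL [Q [q0 [d [F HF]]]]; exists Q, q0, d, F => w.
by rewrite -eqL.
Qed.

Lemma regular_by_automaton T (Q : finType) (d : Q -> T -> Q) (F : pred Q)
    (acc : Q -> seq T -> Prop) :
  (forall q, acc q [::] <-> F q) ->
  (forall q t w, acc q (t :: w) <-> acc (d q t) w) ->
  forall q0, regular (acc q0).
Proof.
move=> acc0 accS q0; exists Q, q0, d, F => w.
by elim: w q0 => [|t w IH] q /=; rewrite ?accS.
Qed.

Lemma regularI T (L1 L2 : seq T -> Prop) :
  regular L1 -> regular L2 -> regular (fun w => L1 w /\ L2 w).
Proof.
move=> [Q1 [q1 [d1 [F1 H1]]]] [Q2 [q2 [d2 [F2 H2]]]].
pose d (q : Q1 * Q2) t := (d1 q.1 t, d2 q.2 t).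
exists (Q1 * Q2)%type, (q1, q2), d, (fun q => F1 q.1 && F2 q.2) => w.
have -> : foldl d (q1, q2) w = (foldl d1 q1 w, foldl d2 q2 w).
  by elim: w (q1) (q2) {H1 H2} => [|t w IH] p1 p2 //=; rewrite IH.
by rewrite H1 H2; split=> [[-> ->] | /andP].
Qed.

Lemma regular_pmap_preim P T (f : P -> option T) (L : seq T -> Prop) :
  regular L -> regular (fun x => L (pmap f x)).
Proof.
move=> [Q [q0 [d [F HF]]]].
pose d' q p := if f p is Some t then d q t else q.
exists Q, q0, d', F => x.
suff -> : foldl d' q0 x = foldl d q0 (pmap f x) by [].
by elim: x q0 {HF} => [|p x IH] q //=; rewrite /d'; case: (f p) => [t|] /=.
Qed.

Lemma regular_map_inj T T' (g : T -> T') (L : seq T -> Prop) :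
  injective g -> regular L -> regular (fun x => exists u, L u /\ x = map g u).
Proof.
move=> ginj [Q [q0 [d [F HF]]]].
pose acc (q : option Q) x :=
  if q is Some q then exists u, x = map g u /\ F (foldl d q u) else False.
apply: (eq_regular (L := acc (Some q0))).
  by move=> x; split=> -[u [Lu Eu]]; exists u; split=> //; apply/HF.
apply: (@regular_by_automaton _ _
   (fun q t' => if q is Some q then omap (d q) (inverse_opt g t') else None)
   (fun q => if q is Some q then F q else false)) => [[q|] | [q|] t w] //=.
- by split=> [[[|? ?] [//= ->]] | Fq]; last exists [::].
- case Et: (inverse_opt g t) => [t0|] /=; last first.
    by split=> // -[[|t0 u] [//= [Eg _] _]]; rewrite Eg inverse_optE in Et.
  rewrite -(inverse_optP Et); split.
    by case=> [[|t1 u] [//= [/ginj -> ->] Fq]]; exists u.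
  by case=> u [-> Fq]; exists (t0 :: u).
Qed.

Lemma regular_nil {T : Type} : regular (fun w : seq T => w = [::]).
Proof.
exists bool, true, (fun _ _ => false), (fun b => b) => -[|t w] //=.
suff -> : foldl (fun _ _ => false) false w = false by [].
by elim: w.
Qed.

Section FlattenBlocks.

Variables (P T : Type) (W : finType) (idx : T -> W) (blk : P -> seq T).
Hypotheses (idx_inj : injective idx) (blk_inj : injective blk).

Let blkW p := map idx (blk p).

Let blkW_inj : injective blkW.
Proof. by move=> p p' /(inj_map idx_inj) /blk_inj. Qed.

Definition blocks4 (x : seq P) := forall p, List.In p x -> size (blk p) = 4.

Let blocks4_cons p x : blocks4 (p :: x) <-> size (blk p) = 4 /\ blocks4 x.
Proof.
split=> [H4 | [Hp Hx] p' /= [<- // | /Hx //]].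
by split=> [|p' Hp']; apply: H4; [left | right].
Qed.

Let flatten_blocks4_cat y r x : size y = 4 -> blocks4 x ->
  y ++ r = flatten (map blkW x) ->
  exists p x', [/\ x = p :: x', blkW p = y & r = flatten (map blkW x')].
Proof.
case: x => [|p x'] Hy; first by case: y Hy.
case/blocks4_cons => Hp _ /= E.
have Hp' : size (blkW p) = 4 by rewrite size_map.
exists p, x'; split=> //.
  by have := congr1 (take 4) E; rewrite !take_size_cat.
by have := congr1 (drop 4) E; rewrite !drop_size_cat.
Qed.

Definition buffer := option (W * option (W * option W)).

Definition buffer_seq (b : buffer) : seq W :=
  match b with
  | None => [::]
  | Some (a, None) => [:: a]
  | Some (a, Some (b, None)) => [:: a; b]
  | Some (a, Some (b, Some c)) => [:: a; b; c]
  end.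

Let flatten_blocks4_buffer b x :
  blocks4 x -> buffer_seq b = flatten (map blkW x) -> b = None /\ x = [::].
Proof.
move=> Hx E.
have size_x : 4 * size x = size (buffer_seq b).
  rewrite E size_flatten /shape -map_comp.
  elim: x Hx {E} => //= p x IH /blocks4_cons [Hp /IH <-].
  by rewrite /= size_map Hp mulnS.
have x0 : x = [::].
  case: x size_x {Hx E} => // p x.
  by case: b => [[? [[? [?|]]|]]|] //=; rewrite mulnS.
by subst x; case: b E {size_x} => [[? [[? [?|]]|]]|].
Qed.

Variables (Q : finType) (d : Q -> P -> Q) (F : pred Q).

Definition decode_block (y : seq W) : option P := inverse_opt blkW y.

Definition block_step (s : option Q * buffer) (t : T) : option Q * buffer :=
  match s.2 with
  | None => (s.1, Some (idx t, None))
  | Some (a, None) => (s.1, Some (a, Some (idx t, None)))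
  | Some (a, Some (b, None)) => (s.1, Some (a, Some (b, Some (idx t))))
  | Some (a, Some (b, Some c)) =>
      (obind (fun q => omap (d q) (decode_block [:: a; b; c; idx t])) s.1, None)
  end.

Definition block_accepts (s : option Q * buffer) (w : seq T) : Prop :=
  if s.1 is Some q then
    exists x, [/\ blocks4 x, buffer_seq s.2 ++ map idx w = flatten (map blkW x)
                & F (foldl d q x)]
  else False.

Lemma regular_block_accepts q0 : regular (block_accepts (Some q0, None)).
Proof.
apply: (@regular_by_automaton _ _ block_step
  (fun s => if s is (Some q, None) then F q else false)) => [[[q|] b] | [[q|] b] t w].
- split; last first.
    by case: b => //= Fq; exists [::]; split=> // ? [].
  case=> x [Hx E Fq]; rewrite /= cats0 in E.
  by case: (flatten_blocks4_buffer Hx E) Fq => -> ->.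
- by case: b.
- case: b => [[a [[b [c|]]|]]|] //; rewrite /block_accepts /block_step /=.
  set y := [:: a; b; c; idx t].
  case Ey: (decode_block y) => [p|] /=; last first.
    split=> // -[x [Hx /(flatten_blocks4_cat (y := y) erefl Hx) [p [x' [_ Ep _]]] _]].
    by rewrite /decode_block -Ep inverse_optE in Ey.
  have Ep := inverse_optP Ey; split.
    case=> x [Hx /(flatten_blocks4_cat (y := y) erefl Hx) [p' [x' [Ex Ep' ->]]] Fq].
    move: Hx Fq; rewrite Ex => /blocks4_cons [_ Hx'] /=.
    by rewrite (blkW_inj (etrans Ep' (esym Ep))) => Fq; exists x'.
  case=> x' [Hx' E Fq]; exists (p :: x'); split=> //=; last by rewrite Ep E.
  by apply/blocks4_cons; split=> //; rewrite -(size_map idx) -/(blkW p) Ep.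
- by case: b => [[a [[b [c|]]|]]|].
Qed.

End FlattenBlocks.

Lemma regular_flatten_blocks4 (P T : Type) (W : finType) (idx : T -> W)
    (blk : P -> seq T) (K : seq P -> Prop) :
  injective idx -> injective blk -> (forall x, K x -> blocks4 blk x) ->
  regular K -> regular (fun w => exists x, K x /\ w = flatten (map blk x)).
Proof.
move=> idx_inj blk_inj K4 [Q [q0 [d [F HF]]]].
apply: eq_regular (regular_block_accepts idx_inj blk_inj d F q0) => w /=.
have flatW x : flatten (map (fun p => map idx (blk p)) x) = map idx (flatten (map blk x)).
  by elim: x => //= p x ->; rewrite map_cat.
split=> [[x [Hx]] | [x [Kx ->]]].
  by rewrite flatW => /(inj_map idx_inj) -> /HF Kx; exists x.
by exists x; rewrite flatW; split=> //; [apply: K4 | apply/HF].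
Qed.

(** * Convolutions *)

Lemma pmap_map (S T U : Type) (f : T -> option U) (g : S -> T) s :
  pmap f (map g s) = pmap (fun x => f (g x)) s.
Proof. by elim: s => //= x s ->. Qed.

Lemma pmap_Some (T : Type) (s : seq T) : pmap Some s = s.
Proof. by elim: s => //= x s ->. Qed.

Lemma pmap_None (S T : Type) (s : seq S) : pmap (fun _ => @None T) s = [::].
Proof. by elim: s. Qed.

Definition ocons T (o : option T) (s : seq T) := if o is Some a then a :: s else s.

Lemma ohead_behead_ocons T (o : option T) s :
  (o = None -> s = [::]) -> ohead (ocons o s) = o /\ behead (ocons o s) = s.
Proof. by case: o => [a|/(_ erefl) ->]. Qed.

Local Arguments conv : simpl never.

Section Convolution.
Variables A B : Type.
Implicit Types (u : seq A) (v : seq B).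

Lemma size_conv u v : size (conv u v) = maxn (size u) (size v).
Proof. by rewrite size_map size_iota. Qed.

Lemma onth_conv u v i :
  onth (conv u v) i = if i < maxn (size u) (size v) then Some (onth u i, onth v i) else None.
Proof.
rewrite onth_map; case: ltnP => [lt_i | le_i]; last by rewrite onth_default ?size_iota.
by rewrite onthE (nth_map 0) ?size_iota // nth_iota.
Qed.

Lemma conv0s v : conv (Nil A) v = [seq (None, Some y) | y <- v].
Proof.
apply: eq_from_onth => i; rewrite onth_conv onth_map onth0n max0n.
by case: ltnP => [|/onth_default -> //]; rewrite -onthTE; case: onth.
Qed.

Lemma convs0 u : conv u (Nil B) = [seq (Some x, None) | x <- u].
Proof.
apply: eq_from_onth => i; rewrite onth_conv onth_map onth0n maxn0.
by case: ltnP => [|/onth_default -> //]; rewrite -onthTE; case: onth.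
Qed.

Lemma conv_cons x u y v : conv (x :: u) (y :: v) = (Some x, Some y) :: conv u v.
Proof.
by apply: eq_from_onth => -[|i]; rewrite onth_conv /= ?onth_conv maxnSS.
Qed.

Lemma pmap_fst_conv u v : pmap (fun q => q.1) (conv u v) = u.
Proof.
elim: u v => [|x u IH] [|y v]; last by rewrite conv_cons /= IH.
all: by rewrite ?conv0s ?convs0 pmap_map ?pmap_Some ?pmap_None.
Qed.

Lemma pmap_snd_conv u v : pmap (fun q => q.2) (conv u v) = v.
Proof.
elim: u v => [|x u IH] [|y v]; last by rewrite conv_cons /= IH.
all: by rewrite ?conv0s ?convs0 pmap_map ?pmap_Some ?pmap_None.
Qed.

Lemma conv_inj u u' v v' : conv u v = conv u' v' -> u = u' /\ v = v'.
Proof.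
move=> E; split; first by rewrite -(pmap_fst_conv u v) E pmap_fst_conv.
by rewrite -(pmap_snd_conv u v) E pmap_snd_conv.
Qed.

Lemma conv_swap u v : [seq (q.2, q.1) | q <- conv u v] = conv v u.
Proof. by rewrite -map_comp maxnC. Qed.

Lemma conv_cat u u' v v' : size u = size v ->
  conv (u ++ u') (v ++ v') = conv u v ++ conv u' v'.
Proof. by elim: u v => [|x u IH] [|y v] //= [/IH]; rewrite !conv_cons => ->. Qed.

Lemma mem_conv_nonempty u v q : List.In q (conv u v) -> isSome q.1 || isSome q.2.
Proof.
elim: u v => [|x u IH] [|y v]; last by rewrite conv_cons => -[<-|/IH].
all: rewrite ?conv0s ?convs0 //; by elim: (_ :: _) => //= ? ? IHs [<-|/IHs].
Qed.

Lemma conv_consP u v q x : conv u v = q :: x <->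
  [/\ isSome q.1 || isSome q.2, q = (ohead u, ohead v) & x = conv (behead u) (behead v)].
Proof.
case: u v => [|a u] [|b v]; rewrite ?conv0s ?convs0 ?conv_cons //=.
- by split=> [|[nz Eq _]] //; rewrite Eq in nz.
all: by split=> [[<- <-] | [_ -> ->]].
Qed.

(* [e1] ([e2]) records that the first (second) track has ended: only padding may follow. *)
Definition conv_state_step (s : option (bool * bool)) (q : option A * option B) :=
  if s is Some (e1, e2) then
    if [|| e1 && isSome q.1, e2 && isSome q.2 | ~~ (isSome q.1 || isSome q.2)] then None
    else Some (e1 || ~~ isSome q.1, e2 || ~~ isSome q.2)
  else None.

Definition conv_state_accepts (s : option (bool * bool)) x :=
  if s is Some (e1, e2) then
    exists u v, [/\ x = conv u v, e1 -> u = [::] & e2 -> v = [::]]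
  else False.

Lemma regular_conv : regular (fun x => exists u v, x = conv u v).
Proof.
apply: (eq_regular (L := conv_state_accepts (Some (false, false)))).
  by move=> x; split=> [[u [v [-> _ _]]] | [u [v ->]]]; exists u, v.
apply: (@regular_by_automaton _ _ conv_state_step (fun s => isSome s)).
  by case=> [[e1 e2]|] //=; split=> // _; exists [::], [::].
case=> [[e1 e2]|] [o1 o2] x //=.
split=> [[u [v [/esym /conv_consP [/= nz [E1 E2] ->] H1 H2]]] | ].
  have -> /= : e1 && isSome o1 = false by case: e1 H1 => // /(_ isT) u0; rewrite E1 u0.
  have -> /= : e2 && isSome o2 = false by case: e2 H2 => // /(_ isT) v0; rewrite E2 v0.
  rewrite nz; exists (behead u), (behead v); split=> //.
    by case/orP=> [/H1 -> // |]; rewrite E1; case: (u).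
  by case/orP=> [/H2 -> // |]; rewrite E2; case: (v).
case: ifP => // /norP [/nandP H1 /norP [/nandP H2 /negbNE nz]].
move=> [u [v [-> H1' H2']]].
have u0 : o1 = None -> u = [::] by move=> o10; apply: H1'; rewrite o10 orbT.
have v0 : o2 = None -> v = [::] by move=> o20; apply: H2'; rewrite o20 orbT.
have [hu bu] := ohead_behead_ocons u0; have [hv bv] := ohead_behead_ocons v0.
exists (ocons o1 u), (ocons o2 v); split.
- by apply/esym/conv_consP; rewrite hu hv bu bv.
- move=> e1T; have o10 : o1 = None by move: H1; rewrite e1T => -[|]; case: (o1).
  by rewrite o10 u0.
- move=> e2T; have o20 : o2 = None by move: H2; rewrite e2T => -[|]; case: (o2).
  by rewrite o20 v0.
Qed.

End Convolution.

Arguments regular_conv {A B}.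

Lemma conv_diag (A : Type) (u : seq A) : conv u u = [seq (Some s, Some s) | s <- u].
Proof. by elim: u => // x u IH; rewrite conv_cons IH. Qed.

Section Projection.
Variables (C C' D D' : Type) (p : C -> option D) (p' : C' -> option D').

Definition conv_proj (q : option C * option C') : option (option D * option D') :=
  let d1 := obind p q.1 in let d2 := obind p' q.2 in
  if isSome d1 || isSome d2 then Some (d1, d2) else None.

Let size_proj (Y Z : Type) (r : Y -> option Z) (X : seq Y) (u : seq Z) :
  (forall i, obind r (onth X i) = onth u i) -> size u <= size X.
Proof. by move=> Xu; rewrite -onthNE -Xu onth_default. Qed.

Lemma pmap_conv_proj (X : seq C) (X' : seq C') (u : seq D) (u' : seq D') :
  (forall i, obind p (onth X i) = onth u i) -> (forall i, obind p' (onth X' i) = onth u' i) ->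
  pmap conv_proj (conv X X') = conv u u'.
Proof.
move=> Xu Xu'; set m := maxn (size u) (size u').
have le_m : m <= maxn (size X) (size X').
  by rewrite geq_max !leq_max (size_proj Xu) (size_proj Xu') orbT.
rewrite /conv pmap_map -(subnKC le_m) iotaD pmap_cat add0n.
rewrite (@eq_in_pmap _ _ _ (fun _ => None) (iota m _)) ?pmap_None ?cats0; last first.
  move=> i; rewrite mem_iota /conv_proj /= Xu Xu' => /andP [+ _].
  by rewrite geq_max => /andP [/onth_default -> /onth_default ->].
rewrite (@eq_in_pmap _ _ _ (fun i => Some (onth u i, onth u' i))) ?pmap_map ?pmap_Some //.
move=> i; rewrite mem_iota add0n /conv_proj /= Xu Xu'.
by rewrite /m leq_max -!onthTE => ->.
Qed.

End Projection.

Lemma onth_conv_fst (A B : Type) (u : seq A) (v : seq B) i :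
  obind (fun q => q.1) (onth (conv u v) i) = onth u i.
Proof.
rewrite onth_conv; case: ltnP => //; rewrite geq_max => /andP [le_u _].
by rewrite onth_default.
Qed.

Lemma onth_conv_snd (A B : Type) (u : seq A) (v : seq B) i :
  obind (fun q => q.2) (onth (conv u v) i) = onth v i.
Proof.
rewrite onth_conv; case: ltnP => //; rewrite geq_max => /andP [_ le_v].
by rewrite onth_default.
Qed.

Section ConvBlocks.
Variables (P T : Type) (blk : P -> seq T) (k : nat).
Hypotheses (blk_inj : injective blk) (size_blk : forall p, size (blk p) = k.+1).

Definition oblk (o : option P) : seq T := if o is Some p then blk p else [::].
Definition conv_block (q : option P * option P) := conv (oblk q.1) (oblk q.2).

Lemma conv_flatten (X X' : seq P) :
  conv (flatten (map blk X)) (flatten (map blk X')) = flatten (map conv_block (conv X X')).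
Proof.
elim: X X' => [|p X IH] [|p' X']; last by rewrite conv_cons /= conv_cat ?size_blk // IH.
- by [].
- rewrite !conv0s map_flatten -!map_comp; congr flatten; apply: eq_map => q.
  by rewrite /conv_block /= conv0s.
- rewrite !convs0 map_flatten -!map_comp; congr flatten; apply: eq_map => q.
  by rewrite /conv_block /= convs0.
Qed.

Lemma oblk_inj : injective oblk.
Proof.
case=> [p|] [p'|] //= => [/blk_inj -> // | | ] /(congr1 size); by rewrite size_blk.
Qed.

Lemma conv_block_inj : injective conv_block.
Proof. by move=> [o1 o2] [o1' o2'] /conv_inj [/= /oblk_inj -> /oblk_inj ->]. Qed.

Lemma size_conv_block X X' q : List.In q (conv X X') -> size (conv_block q) = k.+1.
Proof.
move/mem_conv_nonempty; rewrite /conv_block size_conv.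
by case: q => [[p|] [p'|]] //= _; rewrite ?size_blk ?maxnn ?maxn0 ?max0n.
Qed.

End ConvBlocks.

Lemma fa_recognizable_flatten (P T : Type) (W : finType) (idx : T -> W)
    (blk : P -> seq T) (Rel : seq P -> seq P -> Prop) :
  injective idx -> injective blk -> (forall p, size (blk p) = 4) ->
  fa_recognizable Rel ->
  fa_recognizable (fun w w' =>
    exists X X', [/\ Rel X X', w = flatten (map blk X) & w' = flatten (map blk X')]).
Proof.
move=> idx_inj blk_inj size_blk RelP.
pose idx2 (t : option T * option T) := (omap idx t.1, omap idx t.2).
have idx2_inj : injective idx2.
  by move=> [[a|] [b|]] [[a'|] [b'|]] //= [] => [/idx_inj -> /idx_inj -> | /idx_inj -> | /idx_inj ->].
have blocks4_conv x : (exists X X', Rel X X' /\ x = conv X X') -> blocks4 (conv_block blk) x.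
  by move=> [X [X' [_ ->]]] q /size_conv_block; apply.
apply: (eq_regular _ (regular_flatten_blocks4 idx2_inj (conv_block_inj blk_inj size_blk)
  blocks4_conv RelP)) => w; split.
  move=> [x [[X [X' [R ->]]] ->]].
  exists (flatten (map blk X)), (flatten (map blk X')).
  by rewrite (conv_flatten size_blk); split=> //; exists X, X'.
move=> [u [v [[X [X' [R -> ->]]] ->]]].
by exists (conv X X'); rewrite (conv_flatten size_blk) //; split=> //; exists X, X'.
Qed.

Lemma fa_recognizable_conv_pair (A A' B B' : Type)
    (Rel1 : seq A -> seq A' -> Prop) (Rel2 : seq B -> seq B' -> Prop) :
  fa_recognizable Rel1 -> fa_recognizable Rel2 ->
  fa_recognizable (fun X X' =>
    exists u v u' v', [/\ Rel1 u u', Rel2 v v', X = conv u v & X' = conv u' v']).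
Proof.
move=> R1 R2.
pose proj1 := conv_proj (fun q : option A * option B => q.1) (fun q : option A' * option B' => q.1).
pose proj2 := conv_proj (fun q : option A * option B => q.2) (fun q : option A' * option B' => q.2).
have proj1_conv u v u' v' : pmap proj1 (conv (conv u v) (conv u' v')) = conv u u'.
  by apply: pmap_conv_proj => i; rewrite onth_conv_fst.
have proj2_conv u v u' v' : pmap proj2 (conv (conv u v) (conv u' v')) = conv v v'.
  by apply: pmap_conv_proj => i; rewrite onth_conv_snd.
apply: (eq_regular (L := fun x =>
    (exists X X', x = conv X X') /\
    ((exists u v, pmap (fun q => q.1) x = conv u v) /\
    ((exists u' v', pmap (fun q => q.2) x = conv u' v') /\
    ((exists a a', Rel1 a a' /\ pmap proj1 x = conv a a') /\
     (exists b b', Rel2 b b' /\ pmap proj2 x = conv b b')))))); last first.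
  apply: regularI; first exact: regular_conv.
  apply: regularI; first exact: (regular_pmap_preim (fun q => q.1) regular_conv).
  apply: regularI; first exact: (regular_pmap_preim (fun q => q.2) regular_conv).
  by apply: regularI; [exact: (regular_pmap_preim proj1 R1) | exact: (regular_pmap_preim proj2 R2)].
move=> x; split.
  move=> [[X [X' ->]] [[u [v EX]] [[u' [v' EX']] [[a [a' [Ra Ea]]] [b [b' [Rb Eb]]]]]]].
  rewrite pmap_fst_conv in EX; rewrite pmap_snd_conv in EX'; subst X X'.
  rewrite proj1_conv in Ea; rewrite proj2_conv in Eb.
  case/conv_inj: Ea Ra => <- <- Ru; case/conv_inj: Eb Rb => <- <- Rv.
  by exists (conv u v), (conv u' v'); split=> //; exists u, v, u', v'.
move=> [_ [_ [[u [v [u' [v' [Ru Rv -> ->]]]]] ->]]].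
rewrite pmap_fst_conv pmap_snd_conv proj1_conv proj2_conv.
split; first by exists (conv u v), (conv u' v').
split; first by exists u, v.
split; first by exists u', v'.
by split; [exists u, u' | exists v, v'].
Qed.

(** * Groups and generating sets *)

Section GroupFacts.
Variable G : Grp.
Implicit Types x a : G.

Lemma gmulxV x : gmul x (ginv x) = gone G.
Proof. by rewrite -[LHS]gmul1 -(gmulV (ginv x)) -gmulA (gmulA (ginv x)) gmulV gmul1 gmulV. Qed.

Lemma gmulx1 x : gmul x (gone G) = x.
Proof. by rewrite -(gmulV x) gmulA gmulxV gmul1. Qed.

Lemma ginvK x : ginv (ginv x) = x.
Proof. by rewrite -[LHS]gmulx1 -(gmulV x) gmulA gmulV gmul1. Qed.

Lemma ginv1 : ginv (gone G) = gone G.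
Proof. by rewrite -[LHS]gmulx1 gmulV. Qed.

Lemma gmulK x a : gmul (gmul x a) (ginv a) = x.
Proof. by rewrite -gmulA gmulxV gmulx1. Qed.

Lemma gmulVK x a : gmul (gmul x (ginv a)) a = x.
Proof. by rewrite -gmulA gmulV gmulx1. Qed.

Lemma evalw_cat T (sg : T -> G) u v : evalw sg (u ++ v) = gmul (evalw sg u) (evalw sg v).
Proof. by elim: u => [|t u IH] /=; rewrite ?gmul1 // IH gmulA. Qed.

End GroupFacts.

(* A pair letter may pad one track, i.e. carry the identity of that factor, so each
   factor contributes [S ∪ {1}] to the generators of the product. *)
Definition sym_gens1 (G : Grp) (A : seq G) : seq G :=
  gone G :: List.app A (List.map (@ginv G) A).

Lemma sym_gens1_one (G : Grp) (A : seq G) : List.In (gone G) (sym_gens1 A).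
Proof. by left. Qed.

Lemma sym_gens1_inS (G : Grp) (A : seq G) x : inS A x -> List.In x (sym_gens1 A).
Proof.
move=> [a [Ha [->|->]]]; right; apply/List.in_app_iff; [left | right] => //.
exact: List.in_map.
Qed.

Lemma sym_gens1_inv (G : Grp) (A : seq G) x :
  List.In x (sym_gens1 A) -> List.In (ginv x) (sym_gens1 A).
Proof.
move=> /= [<-|/List.in_app_iff [Hx|/List.in_map_iff [a [<- Ha]]]].
- by left; rewrite ginv1.
- by right; apply/List.in_app_iff; right; apply: List.in_map.
- by right; apply/List.in_app_iff; left; rewrite ginvK.
Qed.

Lemma fa_recognizable_mul_sym_gens1 (G : Grp) (A : seq G) Sig (sg : Sig -> G)
    (L : seq Sig -> Prop) (psi : seq Sig -> G) x :
  cayley_automatic A sg L psi -> List.In x (sym_gens1 A) ->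
  fa_recognizable (fun u u' => L u /\ L u' /\ psi u' = gmul (psi u) x).
Proof.
case=> Lreg _ psi_inj mul_rec /= [<- | /List.in_app_iff [Hx | /List.in_map_iff [a [<- Ha]]]].
- have diag_inj : injective (fun s : Sig => (Some s, Some s)) by move=> s t [].
  apply: (eq_regular _ (regular_map_inj diag_inj Lreg)).
  move=> z; split=> [[u [Lu ->]] | ].
    by exists u, u; rewrite conv_diag gmulx1.
  move=> [u [u' [[Lu [Lu' E]] ->]]]; rewrite gmulx1 in E.
  by exists u; rewrite (psi_inj _ _ Lu' Lu E) conv_diag.
- exact: mul_rec.
- have swap_inj : injective (fun q : option Sig * option Sig => (q.2, q.1)).
    by move=> [? ?] [? ?] [-> ->].
  apply: (eq_regular _ (regular_map_inj swap_inj (mul_rec a Ha))) => z.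
  split=> [[_ [[u [u' [[Lu [Lu' E]] ->]]] ->]] | [u [u' [[Lu [Lu' E]] ->]]]].
    by exists u', u; rewrite conv_swap E gmulK.
  by exists (conv u' u); split; [exists u', u; rewrite E gmulVK | rewrite conv_swap].
Qed.

Lemma finite_embedding (T X : Type) (g : T -> X) (s : seq X) :
  injective g -> (forall t, List.In (g t) s) -> exists idx : T -> 'I_(size s), injective idx.
Proof.
move=> g_inj g_in.
have nth_g t : exists i : 'I_(size s), nth (g t) s i = g t.
  elim: s {g_in}(g_in t) => //= x s IH [<- | /IH [i Ei]]; first by exists ord0.
  by exists (lift ord0 i).
pose idx t := proj1_sig (constructive_indefinite_description _ (nth_g t)).
have idxE t : nth (g t) s (idx t) = g t.
  exact: proj2_sig (constructive_indefinite_description _ (nth_g t)).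
exists idx => t t' E; apply: g_inj.
by rewrite -(idxE t) -(idxE t') E; apply: set_nth_default.
Qed.

Definition letters (G : Grp) (A : seq G) := {z : G | inS A z}.

Lemma letters_inj (G : Grp) (A : seq G) (s t : letters A) : proj1_sig s = proj1_sig t -> s = t.
Proof. by case: s t => [x Hx] [y Hy] /= E; subst y; congr exist; apply: proof_irrelevance. Qed.

Lemma letters_image (G : Grp) (A : seq G) x : inS A x <-> exists s : letters A, proj1_sig s = x.
Proof. by split=> [Hx | [[y Hy] <-]] //; exists (exist _ x Hx). Qed.

Lemma letters_finite (G : Grp) (A : seq G) :
  exists (W : finType) (idx : letters A -> W), injective idx.
Proof.
have [idx idx_inj] : exists idx : letters A -> 'I_(size (List.app A (List.map (@ginv G) A))),
    injective idx.
  apply: finite_embedding (@letters_inj G A) _ => -[x [a [Ha Ex]]] /=.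
  by apply/List.in_app_iff; case: Ex => ->; [left | right; apply: List.in_map].
by eexists; exists idx.
Qed.

Lemma inB_of_letters (Q : nat) (f : nat -> R) (G : Grp) (A : seq G)
    (L : seq (letters A) -> Prop) (psi : seq (letters A) -> G) (N K M : nat) :
  generates A -> cayley_automatic A (@proj1_sig _ _) L psi -> (0 < K)%N -> (0 < M)%N ->
  (forall n, (N <= n)%N -> (Q <= n)%N ->
     cafun_le A (@proj1_sig _ _) L psi n (INR K * f (muln M n))%R) ->
  inB Q f G.
Proof.
move=> genA caA Kp Mp B; exists A; split=> //; exists (letters A), (@proj1_sig _ _).
split; first exact: letters_inj.
split; first exact: letters_image.
by exists L, psi; split=> //; exists N, K, M.
Qed.

Lemma inB_trivial (Q : nat) (f : nat -> R) (G : Grp) (A : seq G) :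
  frakF Q f -> generates A -> (forall z, inS A z -> z = gone G) -> inB Q f G.
Proof.
move=> [_ f_ge0] genA A1.
have words1 w : List.Forall (inS A) w -> evalw (fun x : G => x) w = gone G.
  by elim=> //= x {}w /A1 -> _ ->; rewrite gmul1.
have G1 g : g = gone G by have [w [/words1 + <-]] := genA g.
apply: (@inB_of_letters _ _ _ _ (fun w => w = [::]) (fun _ => gone G) 0 1 1) => //.
  split=> [|g|u v -> -> //|a Ha]; first exact: regular_nil.
    by exists [::]; rewrite (G1 g).
  apply: (eq_regular _ regular_nil) => z.
  split=> [-> | [u [v [[-> [-> _]] ->]]] //].
  by exists [::], [::]; rewrite gmul1 (G1 a).
move=> n _ Qn w -> _; exists [::]; split=> //; split; first by rewrite /= gmulV.
by rewrite mul1n /= Rmult_1_l; apply: f_ge0.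
Qed.

(** * The direct product *)

Lemma Forall_map T U (P : U -> Prop) (g : T -> U) (Q : T -> Prop) s :
  (forall x, Q x -> P (g x)) -> List.Forall Q s -> List.Forall P (map g s).
Proof. by move=> QP; elim=> //= x {}s Qx _ IH; constructor; auto. Qed.

Section ProductGenerators.
Variables (G1 G2 : Grp) (A1 : seq G1) (A2 : seq G2).
Local Notation G := (prodGrp G1 G2).

Definition prod_gens : seq G :=
  List.flat_map (fun x => List.map (fun y => ((x, y) : G)) (sym_gens1 A2)) (sym_gens1 A1).

Lemma mem_prod_gens (z : G) :
  List.In z prod_gens <-> List.In z.1 (sym_gens1 A1) /\ List.In z.2 (sym_gens1 A2).
Proof.
rewrite List.in_flat_map; split=> [[x [Hx /List.in_map_iff [y [<- Hy]]]] // | [H1 H2]].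
by exists z.1; split=> //; apply/List.in_map_iff; exists z.2; case: z H1 H2.
Qed.

Lemma inS_prod_gens (z : G) : inS prod_gens z <-> List.In z prod_gens.
Proof.
split=> [[a [/[dup] Ha /mem_prod_gens [H1 H2] [-> | ->]]] // | Hz]; last by exists z; split=> //; left.
by apply/mem_prod_gens; split; apply: sym_gens1_inv.
Qed.

Lemma prod_word (w1 : seq G1) (w2 : seq G2) :
  List.Forall (inS A1) w1 -> List.Forall (inS A2) w2 ->
  exists w : seq G, [/\ List.Forall (inS prod_gens) w,
    evalw (fun x : G => x) w = ((evalw (fun x => x) w1, evalw (fun x => x) w2) : G)
    & size w = size w1 + size w2].
Proof.
move=> H1 H2.
exists (map (fun x => ((x, gone G2) : G)) w1 ++ map (fun y => ((gone G1, y) : G)) w2); split.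
- apply/List.Forall_app; split.
    apply: Forall_map H1 => x /sym_gens1_inS Hx; apply/inS_prod_gens/mem_prod_gens.
    by split=> //; apply: sym_gens1_one.
  apply: Forall_map H2 => y /sym_gens1_inS Hy; apply/inS_prod_gens/mem_prod_gens.
  by split=> //; apply: sym_gens1_one.
- rewrite evalw_cat.
  have -> : evalw (fun x : G => x) (map (fun x => ((x, gone G2) : G)) w1)
           = ((evalw (fun x => x) w1, gone G2) : G) by elim: w1 {H1} => //= x w1 ->; rewrite gmul1.
  have -> : evalw (fun x : G => x) (map (fun y => ((gone G1, y) : G)) w2)
           = ((gone G1, evalw (fun x => x) w2) : G) by elim: w2 {H2} => //= y w2 ->; rewrite gmul1.
  by rewrite /= gmul1 gmulx1.
- by rewrite size_cat !size_map.
Qed.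

Lemma generates_prod_gens : generates A1 -> generates A2 -> generates prod_gens.
Proof.
move=> gen1 gen2 [x y]; have [w1 [H1 <-]] := gen1 x; have [w2 [H2 <-]] := gen2 y.
by have [w [H E _]] := prod_word H1 H2; exists w.
Qed.

Lemma dA_le_prod (x1 y1 : G1) (x2 y2 : G2) r1 r2 :
  dA_le A1 x1 y1 r1 -> dA_le A2 x2 y2 r2 ->
  dA_le prod_gens ((x1, x2) : G) ((y1, y2) : G) (r1 + r2)%R.
Proof.
move=> [w1 [F1 [E1 S1]]] [w2 [F2 [E2 S2]]].
have [w [F E S]] := prod_word F1 F2.
by exists w; rewrite E E1 E2 S plus_INR; split=> //; split=> //; apply: Rplus_le_compat.
Qed.

End ProductGenerators.

Definition oeval (G : Grp) (Sig : Type) (sg : Sig -> G) (o : option Sig) : G :=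
  if o is Some s then sg s else gone G.

Section ProductRepresentation.
Variables (G1 G2 : Grp).
Local Notation G := (prodGrp G1 G2).
Variables (A1 : seq G1) (Sig1 : Type) (sg1 : Sig1 -> G1).
Variables (L1 : seq Sig1 -> Prop) (psi1 : seq Sig1 -> G1).
Hypotheses (sg1_inj : injective sg1) (sg1_im : forall x, inS A1 x <-> exists s, sg1 s = x).
Hypothesis ca1 : cayley_automatic A1 sg1 L1 psi1.
Variables (A2 : seq G2) (Sig2 : Type) (sg2 : Sig2 -> G2).
Variables (L2 : seq Sig2 -> Prop) (psi2 : seq Sig2 -> G2).
Hypotheses (sg2_inj : injective sg2) (sg2_im : forall x, inS A2 x <-> exists s, sg2 s = x).
Hypothesis ca2 : cayley_automatic A2 sg2 L2 psi2.

Local Notation Ap := (prod_gens A1 A2).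
Local Notation Sigp := (letters Ap).
Local Notation sgp := (@proj1_sig G (inS Ap)).

Variable m : G.
Hypotheses (m_gen : List.In m Ap) (m_neq1 : m <> gone G).

Definition pair_letter := (option Sig1 * option Sig2)%type.

Definition pair_val (p : pair_letter) : G := (oeval sg1 p.1, oeval sg2 p.2).

Lemma pair_val_gen p : inS Ap (pair_val p).
Proof.
have in1 o : List.In (oeval sg1 o) (sym_gens1 A1).
  by case: o => [s|]; [apply/sym_gens1_inS/sg1_im; exists s | apply: sym_gens1_one].
have in2 o : List.In (oeval sg2 o) (sym_gens1 A2).
  by case: o => [s|]; [apply/sym_gens1_inS/sg2_im; exists s | apply: sym_gens1_one].
by apply/inS_prod_gens/mem_prod_gens; split; [apply: in1 | apply: in2].
Qed.

Let one_gen : inS Ap (gone G).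
Proof. by apply/inS_prod_gens/mem_prod_gens; split; apply: sym_gens1_one. Qed.

Let m_inS : inS Ap m.
Proof. exact/inS_prod_gens. Qed.

Let minv_inS : inS Ap (ginv m).
Proof. by exists m; split=> //; right. Qed.

Definition one_letter : Sigp := exist _ (gone G) one_gen.
Definition m_letter : Sigp := exist _ m m_inS.
Definition minv_letter : Sigp := exist _ (ginv m) minv_inS.

(* The first three letters of a block record which tracks are padded: the value
   of a pair letter alone cannot, as a generator of a factor may be trivial. *)
Definition block (p : pair_letter) : seq Sigp :=
  let t := exist _ (pair_val p) (pair_val_gen p) in
  match p with
  | (Some _, Some _) => [:: one_letter; one_letter; one_letter; t]
  | (Some _, None) => [:: one_letter; m_letter; minv_letter; t]
  | (None, Some _) => [:: m_letter; minv_letter; one_letter; t]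
  | (None, None) => [:: m_letter; minv_letter; m_letter; minv_letter]
  end.

Lemma size_block p : size (block p) = 4.
Proof. by case: p => [[?|] [?|]]. Qed.

Lemma block_inj : injective block.
Proof.
move=> [[s1|] [s2|]] [[s1'|] [s2'|]] //= [] //.
all: first [ by move=> /sg1_inj -> /sg2_inj -> | by move=> /sg1_inj -> | by move=> /sg2_inj ->
           | by move=> /esym /m_neq1 | by move=> /m_neq1 ].
Qed.

Lemma evalw_block p : evalw sgp (block p) = pair_val p.
Proof.
have cancel_m x : gmul m (gmul (ginv m) x) = x by rewrite gmulA gmulxV gmul1.
have evalw_cons (s : Sigp) w : evalw sgp (s :: w) = gmul (sgp s) (evalw sgp w) by [].
by case: p => [[s1|] [s2|]]; rewrite !evalw_cons ?gmul1 ?cancel_m //; apply: gmulx1.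
Qed.

Definition encode (x : seq pair_letter) : seq Sigp := flatten (map block x).

Lemma evalw_encode x :
  evalw sgp (encode x) = ((evalw sg1 (pmap (fun q => q.1) x), evalw sg2 (pmap (fun q => q.2) x)) : G).
Proof.
elim: x => //= p x IH; rewrite evalw_cat evalw_block -/(encode x) IH.
by case: p => [[s1|] [s2|]]; rewrite /= ?gmul1.
Qed.

Lemma size_encode x : size (encode x) = 4 * size x.
Proof. by elim: x => //= p x IH; rewrite size_cat size_block IH mulnS. Qed.

Lemma encode_inj : injective encode.
Proof.
elim=> [|p x IH] [|p' x'] // E; have := congr1 size E; rewrite !size_encode // => _.
have /block_inj <- : block p = block p'.
  by have := congr1 (take 4) E; rewrite !take_size_cat ?size_block.
congr cons; apply: IH.
by have := congr1 (drop 4) E; rewrite !drop_size_cat ?size_block.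
Qed.

Definition prod_lang (w : seq Sigp) : Prop :=
  exists u v, [/\ L1 u, L2 v & w = encode (conv u v)].

Definition prod_psi (w : seq Sigp) : G :=
  if inverse_opt (fun uv => encode (conv uv.1 uv.2)) w is Some (u, v)
  then ((psi1 u, psi2 v) : G) else gone G.

Lemma prod_psi_encode u v : prod_psi (encode (conv u v)) = ((psi1 u, psi2 v) : G).
Proof.
rewrite /prod_psi (@inverse_optE _ _ (fun uv => encode (conv uv.1 uv.2)) (u, v)) //.
by move=> [u1 v1] [u2 v2] /encode_inj /conv_inj [/= -> ->].
Qed.

Lemma regular_prod_lang : regular prod_lang.
Proof.
pose K x := (exists u v, x = conv u v) /\
            (L1 (pmap (fun q => q.1) x) /\ L2 (pmap (fun q => q.2) x)).
have Kreg : regular K.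
  case: ca1 => [Lreg1 _ _ _]; case: ca2 => [Lreg2 _ _ _].
  apply: regularI; first exact: regular_conv.
  by apply: regularI; apply: regular_pmap_preim.
have K4 x : K x -> blocks4 block x by move=> _ p _; apply: size_block.
have [W [idx idx_inj]] := letters_finite Ap.
apply: (eq_regular _ (regular_flatten_blocks4 idx_inj block_inj K4 Kreg)) => w.
split=> [[_ [[[u [v ->]] LL] ->]] | [u [v [L1u L2v ->]]]].
  by move: LL; rewrite pmap_fst_conv pmap_snd_conv => -[L1u L2v]; exists u, v.
by exists (conv u v); rewrite /K pmap_fst_conv pmap_snd_conv; split=> //; split=> //; exists u, v.
Qed.

Lemma fa_recognizable_mul_prod a : List.In a Ap ->
  fa_recognizable (fun w w' => prod_lang w /\ prod_lang w' /\ prod_psi w' = gmul (prod_psi w) a).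
Proof.
move=> /mem_prod_gens [a1_in a2_in].
have R1 := fa_recognizable_mul_sym_gens1 ca1 a1_in.
have R2 := fa_recognizable_mul_sym_gens1 ca2 a2_in.
have [W [idx idx_inj]] := letters_finite Ap.
apply: (eq_regular _ (fa_recognizable_flatten idx_inj block_inj size_block
                        (fa_recognizable_conv_pair R1 R2))) => z.
split=> [[w [w' [[_ [_ [[u [v [u' [v' [[L1u [L1u' E1]] [L2v [L2v' E2]] -> ->]]]]] -> ->]]] ->]]]
       | [w [w' [[[u [v [L1u L2v ->]]] [[u' [v' [L1u' L2v' ->]]] E]] ->]]]].
  exists (encode (conv u v)), (encode (conv u' v')); split=> //.
  split; first by exists u, v.
  split; first by exists u', v'.
  by rewrite !prod_psi_encode E1 E2.
rewrite !prod_psi_encode in E; case: E => E1 E2.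
exists (encode (conv u v)), (encode (conv u' v')); split=> //.
by exists (conv u v), (conv u' v'); split=> //; exists u, v, u', v'.
Qed.

Lemma cayley_automatic_prod : cayley_automatic Ap sgp prod_lang prod_psi.
Proof.
case: ca1 => _ onto1 inj1 _; case: ca2 => _ onto2 inj2 _.
split; [exact: regular_prod_lang | | | exact: fa_recognizable_mul_prod].
  move=> [g1 g2]; have [u [L1u <-]] := onto1 g1; have [v [L2v <-]] := onto2 g2.
  by exists (encode (conv u v)); rewrite prod_psi_encode; split=> //; exists u, v.
move=> _ _ [u [v [L1u L2v ->]]] [u' [v' [L1u' L2v' ->]]].
by rewrite !prod_psi_encode => -[/inj1 -> // /inj2 ->].
Qed.

Lemma cafun_le_prod n r1 r2 :
  cafun_le A1 sg1 L1 psi1 n r1 -> cafun_le A2 sg2 L2 psi2 n r2 ->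
  cafun_le Ap sgp prod_lang prod_psi n (r1 + r2).
Proof.
move=> B1 B2 _ [u [v [L1u L2v ->]]]; rewrite size_encode size_conv => le_n.
have le_max : maxn (size u) (size v) <= n by apply: leq_trans le_n; rewrite leq_pmull.
rewrite geq_max in le_max; case/andP: le_max => le_u le_v.
rewrite evalw_encode pmap_fst_conv pmap_snd_conv prod_psi_encode.
exact: dA_le_prod (B1 u L1u le_u) (B2 v L2v le_v).
Qed.

End ProductRepresentation.

Lemma cafun_le_weaken (G : Grp) (A : seq G) Sig (sg : Sig -> G) L psi n r r' :
  (r <= r')%R -> cafun_le A sg L psi n r -> cafun_le A sg L psi n r'.
Proof.
move=> le_r B w Lw le_w; have [v [Fv [Ev Sv]]] := B w Lw le_w.
by exists v; split=> //; split=> //; apply: Rle_trans le_r.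
Qed.

Lemma frakF_sum_le (Q : nat) (f : nat -> R) (K1 K2 M1 M2 n : nat) :
  frakF Q f -> (Q <= n)%N -> (0 < M1)%N -> (0 < M2)%N ->
  (INR K1 * f (muln M1 n) + INR K2 * f (muln M2 n) <= INR (K1 + K2) * f (muln (muln M1 M2) n))%R.
Proof.
move=> [f_mono _] Qn M1p M2p.
have f_le M : (0 < M)%N -> (M %| M1 * M2)%N -> (f (muln M n) <= f (muln (muln M1 M2) n))%R.
  move=> Mp /dvdn_leq le_M; apply: f_mono; first by apply: leq_trans Qn _; rewrite leq_pmull.
  by rewrite leq_mul2r le_M ?muln_gt0 ?M1p ?orbT.
rewrite plus_INR Rmult_plus_distr_r.
apply: Rplus_le_compat; apply: Rmult_le_compat_l; try exact: pos_INR.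
  by apply: f_le; rewrite ?dvdn_mulr.
by apply: f_le; rewrite ?dvdn_mull.
Qed.

Theorem mainTheorem5 (Q : nat) (f : nat -> R) (G1 G2 : Grp) :
  frakF Q f -> inB Q f G1 -> inB Q f G2 -> inB Q f (prodGrp G1 G2).
Proof.
move=> fF [A1 [gen1 [Sig1 [sg1 [inj1 [img1 [L1 [psi1 [ca1 [N1 [K1 [M1 [K1p [M1p B1]]]]]]]]]]]]]]
          [A2 [gen2 [Sig2 [sg2 [inj2 [img2 [L2 [psi2 [ca2 [N2 [K2 [M2 [K2p [M2p B2]]]]]]]]]]]]]].
have gen := generates_prod_gens gen1 gen2.
have [[m [m_gen m_neq1]] | triv] :=
  classic (exists m, List.In m (prod_gens A1 A2) /\ m <> gone (prodGrp G1 G2)); last first.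
  apply: (inB_trivial fF gen) => z /inS_prod_gens z_gen.
  by apply: NNPP => z_neq1; apply: triv; exists z.
have ca := cayley_automatic_prod inj1 img1 ca1 inj2 img2 ca2 m_gen m_neq1.
apply: (inB_of_letters (N := maxn N1 N2) (K := K1 + K2) (M := muln M1 M2) gen ca).
- by rewrite addn_gt0 K1p.
- by rewrite muln_gt0 M1p M2p.
move=> n; rewrite geq_max => /andP [N1n N2n] Qn.
apply: cafun_le_weaken (frakF_sum_le K1 K2 fF Qn M1p M2p) _.
exact: cafun_le_prod (B1 n N1n Qn) (B2 n N2n Qn).
Qed.
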